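(* Let $P$ be a probability distribution on a measurable space $\Omega$, let $\mathcal{Y}\subset\mathbb{R}^n$, and for each $y\in\mathcal{Y}$ let $G(y)\subset\Omega$ be a measurable set (the set $\{(y,\omega):\omega\in G(y)\}$ being jointly measurable), and put $\epsilon(y)=1-P(G(y))$. Fix $\epsilon,\delta\in(0,1)$ and positive numbers $\kappa_1,\kappa_2,\dots$ with $\sum_{s\geq1}\kappa_s^{-1}\leq 1$, and integers $N_s\geq \ln(\kappa_s/\delta)/\epsilon$. Consider a randomized procedure which at steps $s=1,2,\dots$ chooses a point $y^s\in\mathcal{Y}$ as a measurable deterministic function of all samples drawn at the steps preceding $s$, then draws $N_s$ samples $\omega^1_s,\dots,\omega^{N_s}_s$ from $P$, independent of each other and of all previously drawn samples, and stops with output $y^s$ if $\omega^\ell_s\in G(y^s)$ for all $\ell\leq N_s$ (otherwise it proceeds to step $s+1$, or may stop without output). Then the probability of the event ''the procedure stops at some step $s$ with output $y^s$ satisfying $\epsilon(y^s)\geq\epsilon$'' is at most $\delta$.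
   Context: In the application, $\omega=\xi^K$ is the random data trajectory and $G(y)$ is the set of realizations for which, for every $t\leq K$, there exists $x_t$ with $(y,x_t)\in\mathcal{Z}^t_{\xi_t}$; a point $y$ with $\epsilon(y)\leq\epsilon$ is then called $(1-\epsilon)$-implementable. A typical choice is $\kappa_s=s^2\sum_{r\geq1}r^{-2}$ and $N_s$ the smallest integer strictly greater than $\ln(\kappa_s/\delta)/\epsilon$. *)

From HB Require Import structures.
From mathcomp Require Import all_boot all_order all_algebra.
From mathcomp Require Import all_classical all_reals all_analysis.
Set Implicit Arguments. Unset Strict Implicit. Unset Printing Implicit Defensive.
Import Order.TTheory GRing.Theory Num.Theory.
Import numFieldNormedType.Exports.
Local Open Scope classical_set_scope.
Local Open Scope ring_scope.

Definition Rn (R : realType) (n : nat) := g_sigma_algebraType (@open 'rV[R]_n).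

Definition mutually_independent {d d' : measure_display} {T : measurableType d}
  {R : realType} (Q : probability T R) {I : eqType} (D : set I)
  {O : measurableType d'} (X : I -> T -> O) : Prop :=
  forall (J : seq I) (A : I -> set O),
    uniq J -> (forall j, j \in J -> D j) ->
    (forall j, j \in J -> measurable (A j)) ->
    Q (\bigcap_(j in [set j | j \in J]) (X j @^-1` A j)) =
    (\big[*%E/1%E]_(j <- J) Q (X j @^-1` A j))%E.

Definition past_gen {d d' : measure_display} {T : measurableType d}
  {O : measurableType d'} (N : nat -> nat) (X : nat * nat -> T -> O) (s : nat)
  : set (set T) :=
  [set B | exists r l (A : set O),
     [/\ (r < s)%N, (l < N r)%N, measurable A & B = X (r, l) @^-1` A]].

From HB Require Import structures.
From mathcomp Require Import all_boot all_order all_algebra.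
From mathcomp Require Import all_classical all_reals all_analysis.
From mathcomp Require Import lra measurable_realfun.
Set Implicit Arguments. Unset Strict Implicit. Unset Printing Implicit Defensive.
Import Order.TTheory GRing.Theory Num.Theory.
Import numFieldNormedType.Exports.
Local Open Scope classical_set_scope.
Local Open Scope ring_scope.

(* Let F_S be the sigma-algebra generated by the samples X j, j in S.  If
   the sample i is not in S, independence gives Q (E `&` [X i in B]) =
   Q E * P B for all E in F_S (first on finite cylinders, then by the pi-lambda
   theorem), i.e. (id, X i) has law Q (x) P on F_S (x) Omega.  By Tonelli,
   Q (K `&` [(Z, X i) in H]) <= c * Q K whenever K and Z are F_S-measurable and
   P (H_(Z t)) <= c on K.  The point y s depends only on the samples of earlier
   steps, so applying this to the k-th sample of step s with
   K = [eps(y s) >= eps and the first k samples of step s land in G (y s)]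
   yields by induction on k that the procedure stops at step s with a bad output
   with probability at most (1 - eps)^(N s) <= delta / kappa s.  A union bound
   over s and sum_s 1 / kappa s <= 1 conclude. *)

Section cylinder.
Context d d' (T : measurableType d) (Omega : measurableType d') (I : choiceType).
Variable X : I -> T -> Omega.
Hypothesis mX : forall i, measurable_fun setT (X i).

Definition cylinder (S : set I) : set (set T) :=
  [set E | exists J (A : I -> set Omega),
    [/\ uniq J, (forall j, j \in J -> S j), (forall j, j \in J -> measurable (A j)) &
        E = \bigcap_(j in [set` J]) (X j @^-1` A j)]].

Lemma cylinder_preimage S j A : S j -> measurable A -> cylinder S (X j @^-1` A).
Proof.
move=> Sj mA; exists [:: j], (fun=> A); split => //.
- by move=> k; rewrite inE => /eqP ->.
- by rewrite bigcap_seq big_seq1.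
Qed.

Lemma cylinder_setT S : cylinder S setT.
Proof. by exists [::], (fun=> setT); rewrite bigcap_seq big_nil. Qed.

Lemma cylinder_setI_closed S : setI_closed (cylinder S).
Proof.
move=> _ _ [J1 [A1 [uJ1 SJ1 mA1 ->]]] [J2 [A2 [uJ2 SJ2 mA2 ->]]].
pose A j := (if j \in J1 then A1 j else setT) `&` (if j \in J2 then A2 j else setT).
exists (undup (J1 ++ J2)), A; split.
- exact: undup_uniq.
- by move=> j; rewrite mem_undup mem_cat => /orP[/SJ1|/SJ2].
- move=> j _; apply: measurableI; case: ifPn => // jJ; [exact: mA1|exact: mA2].
apply/seteqP; split => t.
- move=> [t1 t2] j /=; rewrite mem_undup mem_cat => _.
  by split; case: ifPn => // jJ; [exact: t1|exact: t2].
- move=> tA; split => j jJ; have /= := tA j.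
  + by rewrite mem_undup mem_cat jJ /= => /(_ isT) -[]; rewrite jJ.
  + by rewrite mem_undup mem_cat jJ orbT /= => /(_ isT) -[] _; rewrite jJ.
Qed.

Lemma cylinder_measurable S : cylinder S `<=` measurable.
Proof.
move=> _ [J [A [_ _ mA ->]]]; rewrite bigcap_seq big_seq.
apply: (big_ind measurable) => //; first exact: measurableI.
by move=> j /mA mAj; rewrite -[X in measurable X]setTI; exact: mX.
Qed.

Lemma sigma_cylinder_measurable S : <<s cylinder S >> `<=` measurable.
Proof. exact: smallest_sub (@sigma_algebra_measurable _ T) (@cylinder_measurable S). Qed.

Lemma measurable_fun_cylinder S j : S j ->
  measurable_fun [set: g_sigma_algebraType (cylinder S)] (X j).
Proof.
by move=> Sj _ A mA; rewrite setTI; apply: sub_gen_smallest; exact: cylinder_preimage.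
Qed.

End cylinder.

Section independence.
Context d d' (T : measurableType d) (Omega : measurableType d') (I : choiceType)
  (R : realType) (Q : probability T R) (P : probability Omega R).
Variables (X : I -> T -> Omega) (D : set I).
Hypothesis mX : forall i, measurable_fun setT (X i).
Hypothesis XP : forall i, D i -> forall A, measurable A -> Q (X i @^-1` A) = P A.
Hypothesis Xind : mutually_independent Q D X.
Variables (S : set I) (i : I).
Hypotheses (SD : S `<=` D) (Di : D i) (Si : ~ S i).
Local Open Scope ereal_scope.

Lemma cylinder_indep B E : measurable B -> cylinder X S E ->
  Q (E `&` X i @^-1` B) = Q E * P B.
Proof.
move=> mB [J [A [uJ SJ mA ->]]].
have iJ : i \notin J by apply/negP => /SJ.
pose A' j := if j == i then B else A j.
have A'E : {in J, A' =1 A}.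
  by move=> j jJ; rewrite /A'; case: eqP => // ji; move: iJ; rewrite -ji jJ.
have uiJ : uniq (i :: J) by rewrite /= iJ.
have DiJ j : j \in i :: J -> D j by rewrite inE => /predU1P[->|/SJ/SD].
have miJ j : j \in i :: J -> measurable (A' j).
  by rewrite inE => /predU1P[->|jJ]; rewrite /A' ?eqxx // -/(A' j) A'E //; exact: mA.
have := Xind uiJ DiJ miJ.
rewrite bigcap_seq big_cons -bigcap_seq big_cons.
rewrite (eq_bigcapr (G := fun j => X j @^-1` A j)); last by move=> j jJ; rewrite A'E.
rewrite (eq_big_seq (fun j => Q (X j @^-1` A j))); last by move=> j jJ; rewrite A'E.
rewrite -Xind // => [|j /SJ/SD //].
by rewrite /A' eqxx setIC XP // muleC.
Qed.

Lemma sigma_cylinder_indep B E : measurable B -> <<s cylinder X S >> E ->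
  Q (E `&` X i @^-1` B) = Q E * P B.
Proof.
move=> mB sE.
have mXB : measurable (X i @^-1` B) by rewrite -[X in measurable X]setTI; exact: mX.
have PB0 : (0 <= fine (P B))%R by rewrite fine_ge0.
have PBE : P B = (fine (P B))%:E by rewrite fineK ?fin_num_measure.
have scaleE A : mscale (NngNum PB0) Q A = Q A * P B by rewrite /mscale /= muleC -PBE.
have eqE : mrestr Q mXB E = mscale (NngNum PB0) Q E.
  apply: (g_sigma_algebra_measure_unique (cylinder X S)
    (cylinder_measurable mX (S := S)) (fun=> setT) (fun=> cylinder_setT X S)) => //.
  - by rewrite bigcup_const.
  - exact: cylinder_setI_closed.
  - by move=> A cA; apply: (etrans _ (esym (scaleE A))); exact: cylinder_indep.
  - move=> _; rewrite -[X in X < _]/(Q (setT `&` _)) setTI.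
    by rewrite (le_lt_trans (probability_le1 _ _)) ?ltey.
by rewrite -[LHS]/(mrestr Q mXB E) eqE -scaleE.
Qed.

Let Tg := g_sigma_algebraType (cylinder X S).

Let measurable_id_cylinder : measurable_fun [set: T] (id : T -> Tg).
Proof. by move=> _ A mA; rewrite setTI; exact: sigma_cylinder_measurable mA. Qed.

Let id_cylinder : {mfun T >-> Tg} :=
  HB.pack (id : T -> Tg) (isMeasurableFun.Build _ _ _ _ _ measurable_id_cylinder).

Let pair_cylinder : {mfun T >-> (Tg * Omega)%type} :=
  HB.pack (fun t => (t : Tg, X i t)) (isMeasurableFun.Build _ _ _ _ _
    (measurable_fun_pair measurable_id_cylinder (mX i))).

Lemma cylinder_pair_law (W : set (Tg * Omega)) : measurable W ->
  Q ((fun t => (t : Tg, X i t)) @^-1` W) = (distribution Q id_cylinder \x P) W.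
Proof.
move=> mW; apply/esym/(product_measure_unique (m' := distribution Q pair_cylinder)) => //.
by move=> A B mA mB; exact: sigma_cylinder_indep.
Qed.

Lemma measure_indep_sectionI_le d3 (E : measurableType d3) (Z : T -> E)
    (H : set (E * Omega)) (K : set T) (c : R) :
  (forall B, measurable B -> <<s cylinder X S >> (Z @^-1` B)) -> measurable H ->
  <<s cylinder X S >> K -> (0 <= c)%R ->
  (forall t, K t -> P [set w | H (Z t, w)] <= c%:E) ->
  Q (K `&` [set t | H (Z t, X i t)]) <= c%:E * Q K.
Proof.
move=> mZ mH sK c0 Kc.
have mZg : measurable_fun [set: Tg] Z by move=> _ B mB; rewrite setTI; exact: mZ.
pose W : set (Tg * Omega) := (K `*` setT) `&` ((fun p => (Z p.1, p.2)) @^-1` H).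
have mW : measurable W.
  apply: measurableI; first exact: measurableX.
  rewrite -[X in measurable X]setTI.
  by apply: (measurable_fun_pair (measurableT_comp mZg measurable_fst) measurable_snd).
have -> : K `&` [set t | H (Z t, X i t)] = (fun t => (t : Tg, X i t)) @^-1` W.
  by apply/seteqP; split => t; rewrite /W /= => -[]; [|case].
rewrite cylinder_pair_law //.
have -> : c%:E * Q K = \int[distribution Q id_cylinder]_t (c%:E * (\1_K t)%:E).
  rewrite ge0_integralZl_EFin //; last by apply/measurable_EFinP; exact: measurable_indic.
  by rewrite integral_indic // setIT.
apply: ge0_le_integral => //.
- exact: measurable_fun_xsection.
- by apply: measurable_funeM; apply/measurable_EFinP; exact: measurable_indic.
move=> t _ /=; have [Kt|nKt] := pselect (K t).
- have -> : xsection W t = [set w | H (Z t, w)].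
    by apply/seteqP; split => w; rewrite /xsection /W /= inE; [case|do ?split].
  by rewrite indicE mem_set // mule1; exact: Kc.
- have -> : xsection W t = set0.
    by apply/seteqP; split => w //; rewrite /xsection /W /= inE => -[[]].
  by rewrite measure0 mule_ge0 // lee_fin.
Qed.

End independence.

Lemma expr_onem_le_div (R : realType) (eps delta k : R) (N : nat) :
  0 < eps < 1 -> 0 < delta -> 0 < k -> ln (k / delta) / eps <= N%:R ->
  (1 - eps) ^+ N <= delta / k.
Proof.
move=> /andP[eps0 eps1] delta0 k0 lnN.
apply: (@le_trans _ _ (expR (- eps) ^+ N)).
  apply: lerXn2r; rewrite ?nnegrE ?expR_ge0 //; last exact: expR_ge1Dx.
  by rewrite subr_ge0 ltW.
have kdelta0 : 0 < k / delta by exact: divr_gt0.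
have -> : delta / k = expR (- ln (k / delta)) by rewrite expRN lnK ?posrE // invf_div.
by rewrite -expRM_natr ler_expR mulNr lerN2 -ler_pdivrMl // mulrC.
Qed.

Section procedure.
Context (R : realType) d1 d2 d3 (Omega : measurableType d1) (P : probability Omega R)
  (Y : measurableType d3) (G : Y -> set Omega) (T : measurableType d2)
  (Q : probability T R).
Variables (N : nat -> nat) (X : nat * nat -> T -> Omega) (y : nat -> T -> Y).
Hypothesis mG : measurable [set z : Y * Omega | G z.1 z.2].
Hypothesis mX : forall s l, measurable_fun setT (X (s, l)).
Hypothesis XP : forall s l, (l < N s)%N -> forall A, measurable A ->
  Q (X (s, l) @^-1` A) = P A.
Hypothesis Xind : mutually_independent Q [set sl | (sl.2 < N sl.1)%N] X.
Hypothesis my : forall s B, measurable B -> <<s past_gen N X s >> (y s @^-1` B).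
Variable eps : R.

Let measurable_sample j : measurable_fun setT (X j). Proof. by case: j. Qed.

Definition bad_point := [set z : Y | (eps%:E <= 1 - P (G z))%E].

Definition accepts s k := [set t | forall l, (l < k)%N -> G (y s t) (X (s, l) t)].

Let xsectionG z : xsection [set z : Y * Omega | G z.1 z.2] z = G z.
Proof. by apply/seteqP; split => w; rewrite /xsection /= inE. Qed.

Lemma bad_pointE z : bad_point z = (P (G z) <= (1 - eps)%:E)%E.
Proof.
have mGz : measurable (G z) by rewrite -xsectionG; exact: measurable_xsection.
rewrite /bad_point /= -[P (G z)]fineK ?fin_num_measure // -EFinB !lee_fin.
by rewrite !lerBrDr addrC.
Qed.

Lemma measurable_bad_point : measurable bad_point.
Proof.
have mPG : measurable_fun setT (fun z => P (G z)).
  by under eq_fun do rewrite -xsectionG; exact: measurable_fun_xsection.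
have -> : bad_point = (fun z => P (G z)) @^-1` `]-oo, (1 - eps)%:E].
  by apply/seteqP; split => z; rewrite /= in_itv /= bad_pointE.
by rewrite -[X in measurable X]setTI; apply: mPG => //; exact: emeasurable_itv.
Qed.

Lemma past_measurable s : <<s past_gen N X s >> `<=` measurable.
Proof.
apply: smallest_sub; first exact: sigma_algebra_measurable.
move=> _ [r [l [A [_ _ mA ->]]]].
by rewrite -[X in measurable X]setTI; exact: mX.
Qed.

Definition drawn_before s k : set (nat * nat) :=
  [set rl | (rl.1 < s)%N /\ (rl.2 < N rl.1)%N \/ rl.1 = s /\ (rl.2 < k)%N].

Lemma past_sub_cylinder s S : drawn_before s 0 `<=` S ->
  <<s past_gen N X s >> `<=` <<s cylinder X S >>.
Proof.
move=> sub; apply: sub_smallest2r; first exact: smallest_sigma_algebra.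
by move=> _ [r [l [A [rs lN mA ->]]]]; apply: cylinder_preimage => //; apply: sub; left.
Qed.

Lemma acceptsS s k :
  accepts s k.+1 = accepts s k `&` [set t | G (y s t) (X (s, k) t)].
Proof.
apply/seteqP; split => t /=.
- by move=> Ht; split => [l lk|]; apply: Ht => //; exact: ltnW.
- by move=> [Ht Hk] l; rewrite ltnS leq_eqVlt => /predU1P[->//|/Ht].
Qed.

Lemma measurable_accepts s k S : drawn_before s k `<=` S ->
  <<s cylinder X S >> (accepts s k).
Proof.
move=> sub; have sub0 : drawn_before s 0 `<=` S by move=> rl [?|[_ //]]; apply: sub; left.
have my_cyl : measurable_fun [set: g_sigma_algebraType (cylinder X S)] (y s).
  by move=> _ B mB; rewrite setTI; exact: past_sub_cylinder sub0 _ (@my s B mB).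
suff : @measurable _ (g_sigma_algebraType (cylinder X S)) (accepts s k) by [].
elim: k sub => [|k IHk] sub.
  by have -> : accepts s 0 = setT by apply/seteqP; split => // t _ l.
rewrite acceptsS; apply: measurableI.
  by apply: IHk => -[r l] [?|[/= -> lk]]; apply: sub; [left|right; split => //; exact: ltnW].
have mXk : measurable_fun [set: g_sigma_algebraType (cylinder X S)] (X (s, k)).
  by apply: measurable_fun_cylinder; apply: sub; right; split.
have -> : [set t | G (y s t) (X (s, k) t)] =
  (fun t => (y s t, X (s, k) t)) @^-1` [set z | G z.1 z.2] by [].
rewrite -[X in measurable X]setTI.
by apply: (measurable_fun_pair my_cyl mXk).
Qed.

Lemma cylinder_bad_accepts s k S : drawn_before s k `<=` S ->
  <<s cylinder X S >> (y s @^-1` bad_point `&` accepts s k).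
Proof.
move=> sub; apply: (@measurableI _ (g_sigma_algebraType (cylinder X S))).
- apply: past_sub_cylinder (my measurable_bad_point).
  by move=> rl [?|[_ //]]; apply: sub; left.
- exact: measurable_accepts.
Qed.

Hypothesis eps_le1 : eps <= 1.

Let sample_law i : (i.2 < N i.1)%N -> forall A, measurable A -> Q (X i @^-1` A) = P A.
Proof. by case: i; exact: XP. Qed.

Lemma bad_accepts_le s k : (k <= N s)%N ->
  (Q (y s @^-1` bad_point `&` accepts s k) <= ((1 - eps) ^+ k)%:E)%E.
Proof.
elim: k => [|k IHk] kN.
  rewrite expr0; apply: probability_le1.
  apply: (sigma_cylinder_measurable measurable_sample (S := setT)).
  exact: cylinder_bad_accepts.
have drawnD : drawn_before s k `<=` [set sl | (sl.2 < N sl.1)%N].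
  by move=> [r l] [[_ lN]|[/= -> lk]] //; exact: ltn_trans lk kN.
have not_drawn : ~ drawn_before s k (s, k) by move=> [[]|[_]]; rewrite ltnn.
rewrite acceptsS setIA.
have K_cyl := cylinder_bad_accepts (@subset_refl _ (drawn_before s k)).
apply: (le_trans (measure_indep_sectionI_le measurable_sample sample_law Xind
  (i := (s, k)) drawnD kN not_drawn (Z := y s) (c := 1 - eps) _ mG K_cyl _ _)).
- by move=> B mB; apply: past_sub_cylinder (my mB) => rl [?|[_ //]]; left.
- by rewrite subr_ge0.
- by move=> t [bt _]; rewrite -bad_pointE.
by rewrite exprS EFinM lee_wpmul2l ?lee_fin ?subr_ge0 // IHk // ltnW.
Qed.

Variable cont : nat -> T -> bool.
Hypothesis mcont : forall s, <<s past_gen N X s.+1 >> (cont s @^-1` [set true]).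

Definition stops_bad s := [set t |
  [/\ forall r, (r < s)%N -> cont r t /\ ~ accepts r (N r) t,
      accepts s (N s) t & bad_point (y s t)]].

Lemma measurable_accepts_bad s k : measurable (y s @^-1` bad_point `&` accepts s k).
Proof.
exact: (sigma_cylinder_measurable measurable_sample (S := setT))
  (cylinder_bad_accepts (subsetT _)).
Qed.

Lemma measurable_stops_bad : measurable [set t | exists s, stops_bad s t].
Proof.
have -> : [set t | exists s, stops_bad s t] = \bigcup_s
    (\bigcap_(r in [set r | (r < s)%N]) (cont r @^-1` [set true] `&` ~` accepts r (N r))
     `&` (y s @^-1` bad_point `&` accepts s (N s))).
  apply/seteqP; split => t [s].
  - by move=> [Hr acc bad]; exists s => //; split => // r /Hr.
  - by move=> _ [Hr [bad acc]]; exists s; split => // r /Hr.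
apply: bigcupT_measurable => s; apply: measurableI; last exact: measurable_accepts_bad.
apply: bigcap_measurableType => r _; apply: measurableI.
- by apply: (@past_measurable r.+1); exact: mcont.
- apply: measurableC.
  exact: (sigma_cylinder_measurable measurable_sample (S := setT))
    (measurable_accepts (subsetT _)).
Qed.

Lemma stops_bad_le :
  (Q [set t | exists s, stops_bad s t] <= \sum_(0 <= s <oo) ((1 - eps) ^+ N s)%:E)%E.
Proof.
apply: (le_trans (measure_sigma_subadditive Q
  (fun s => measurable_accepts_bad s (N s)) measurable_stops_bad _)).
  by move=> t [s [_ acc bad]]; exists s.
by apply: lee_nneseries => s _; [move=> _; exact: measure_ge0|exact: bad_accepts_le].
Qed.

End procedure.

Unset Implicit Arguments. Set Strict Implicit. Set Printing Implicit Defensive.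

Theorem mainTheorem4 (R : realType) (n : nat) (d1 d2 : measure_display)
  (Omega : measurableType d1) (P : probability Omega R)
  (Ycal : set 'rV[R]_n) (G : 'rV[R]_n -> set Omega)
  (hGy : forall y, Ycal y -> measurable (G y))
  (hG : measurable [set z : (Rn R n * Omega)%type | G z.1 z.2])
  (eps delta : R) (heps : 0 < eps < 1) (hdelta : 0 < delta < 1)
  (kappa : nat -> R) (hkappa : forall s, 0 < kappa s)
  (hsum : (\sum_(0 <= s <oo) ((kappa s)^-1)%:E <= 1)%E)
  (N : nat -> nat) (hN : forall s, ln (kappa s / delta) / eps <= (N s)%:R)
  (T : measurableType d2) (Q : probability T R)
  (X : nat * nat -> T -> Omega)
  (hXm : forall s l, measurable_fun setT (X (s, l)))
  (hXP : forall s l, (l < N s)%N -> forall A, measurable A ->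
           Q (X (s, l) @^-1` A) = P A)
  (hXind : mutually_independent Q [set sl | (sl.2 < N sl.1)%N] X)
  (y : nat -> T -> Rn R n) (hyY : forall s t, Ycal (y s t))
  (hy : forall s (B : set (Rn R n)), measurable B ->
          <<s past_gen N X s >> (y s @^-1` B))
  (cont : nat -> T -> bool)
  (hcont : forall s, <<s past_gen N X s.+1 >> (cont s @^-1` [set true])) :
  (Q [set t | exists s,
        [/\ (forall r, (r < s)%N ->
               cont r t /\ ~ (forall l, (l < N r)%N -> G (y r t) (X (r, l) t))),
            (forall l, (l < N s)%N -> G (y s t) (X (s, l) t)) &
            (eps%:E <= 1 - P (G (y s t)))%E]] <= delta%:E)%E.
Proof.
have [eps0 eps1] := andP heps; have [delta0 delta1] := andP hdelta.
apply: le_trans (stops_bad_le hG hXm hXP hXind hy (ltW eps1) hcont) _.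
apply: (@le_trans _ _ (\sum_(0 <= s <oo) (delta%:E * ((kappa s)^-1)%:E))%E).
  apply: lee_nneseries => s _.
    by move=> _; rewrite lee_fin exprn_ge0 // subr_ge0 ltW.
  by rewrite -EFinM lee_fin; exact: expr_onem_le_div.
rewrite nneseriesZl; last by move=> s _; rewrite lee_fin invr_ge0 ltW.
by rewrite -[leRHS]mule1 lee_wpmul2l // lee_fin ltW.
Qed.
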